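(* Let $A$ be a nonempty set and let $G\subseteq A^A$ be a group under composition of maps, with identity element $e$. Define the equivalence relation $\sim$ on $A$ by $a\sim b$ iff $e(a)=e(b)$, write $[a]$ for the class of $a$, and for $f\in G$ let $\hat f:A/\sim\,\to A/\sim$ be given by $\hat f([x])=[f(x)]$. Set $\hat G=\{\hat f\mid f\in G\}$. Then $\hat G$ is a permutation group on $A/\sim$, and the map $\rho:G\to\hat G$, $f\mapsto\hat f$, is a group isomorphism.
   Context: $A^A$ denotes the set of all maps $A\to A$. A permutation group on a set $X$ is a group of bijections $X\to X$ under composition. The identity element $e$ of $G$ need not be the identity map of $A$. *)

Set Implicit Arguments.
Unset Strict Implicit.

Definition comp {A : Type} (f g : A -> A) : A -> A := fun x => f (g x).

(* G (a set of maps A -> A) is a group under composition with identity e.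
   Associativity of composition is automatic. *)
Definition group_of_maps (A : Type) (G : (A -> A) -> Prop) (e : A -> A) : Prop :=
  G e /\
  (forall f g, G f -> G g -> G (comp f g)) /\
  (forall f, G f -> comp e f = f /\ comp f e = f) /\
  (forall f, G f -> exists g, G g /\ comp f g = e /\ comp g f = e).

Definition sim (A : Type) (e : A -> A) (a b : A) : Prop := e a = e b.
Definition cls (A : Type) (e : A -> A) (a : A) : A -> Prop := fun b => sim e b a.

Definition quot (A : Type) (e : A -> A) : Type :=
  { X : A -> Prop | exists a, X = cls e a }.

Definition qcls (A : Type) (e : A -> A) (a : A) : quot e :=
  exist (fun X => exists a', X = cls e a') (cls e a) (ex_intro _ a eq_refl).

Definition is_hat (A : Type) (e : A -> A) (f : A -> A) (F : quot e -> quot e) : Prop :=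
  forall x, F (qcls e x) = qcls e (f x).
Arguments is_hat {A} e f F.

Definition Ghat (A : Type) (G : (A -> A) -> Prop) (e : A -> A) (F : quot e -> quot e) : Prop :=
  exists f, G f /\ is_hat e f F.

Definition bijective (X : Type) (h : X -> X) : Prop :=
  (forall x y, h x = h y -> x = y) /\ (forall y, exists x, h x = y).

Definition perm_group (X : Type) (H : (X -> X) -> Prop) : Prop :=
  (forall h, H h -> bijective h) /\
  H (fun x => x) /\
  (forall h k, H h -> H k -> H (comp h k)) /\
  (forall h, H h -> exists k, H k /\ comp h k = (fun x => x) /\ comp k h = (fun x => x)).

Arguments Ghat {A} G e F.
Arguments qcls {A} e a.
Arguments cls {A} e a.
Arguments sim {A} e a b.
Arguments quot {A} e.
Arguments group_of_maps {A} G e.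

(** The class of [f x] depends only on the class of [x] for [f] in [G],
    because [f = f ∘ e]: so [f ↦ f̂] is well defined, and it is multiplicative
    since [f̂ ĝ [x] = [f (g x)]].  Its image [Ĝ] is therefore a group with unit
    [ê = id] (as [e ∘ e = e]), whose elements are bijections since they have
    two-sided inverses.  Injectivity comes from [e ∘ f = f]: if [[f x] = [g x]]
    then [f x = e (f x) = e (g x) = g x]. *)

From Stdlib Require Import FunctionalExtensionality PropExtensionality ProofIrrelevance.

Set Implicit Arguments.
Unset Strict Implicit.

Section Quotient.

Variables (A : Type) (e : A -> A).

Lemma quot_eq (X Y : quot e) : proj1_sig X = proj1_sig Y -> X = Y.
Proof.
  destruct X as [X pX], Y as [Y pY]; simpl; intros <-.
  f_equal; apply proof_irrelevance.
Qed.

Lemma qcls_eq (x y : A) : qcls e x = qcls e y <-> e x = e y.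
Proof.
  split; intro H.
  - apply (f_equal (fun X => proj1_sig X x)) in H; simpl in H.
    unfold cls, sim in H; rewrite <- H; reflexivity.
  - apply quot_eq; simpl; unfold cls, sim.
    apply functional_extensionality; intro b; rewrite H; reflexivity.
Qed.

Lemma qcls_surj (X : quot e) : exists a, X = qcls e a.
Proof.
  destruct X as [X [a Ha]]; exists a; apply quot_eq; exact Ha.
Qed.

(* Using the representative [e a] rather than [a] makes the image of a class a
   class for every map [f], compatible with [~] or not. *)
Definition quot_lift_set (f : A -> A) (X : quot e) (b : A) : Prop :=
  exists a, proj1_sig X a /\ e b = e (f (e a)).

Lemma quot_lift_set_cls (f : A -> A) (x : A) :
  quot_lift_set f (qcls e x) = cls e (f (e x)).
Proof.
  apply functional_extensionality; intro b; apply propositional_extensionality.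
  unfold quot_lift_set, cls, sim; simpl; split.
  - intros [a [Ha Hb]]; unfold cls, sim in Ha; rewrite Hb, Ha; reflexivity.
  - intro Hb; exists x; split; [reflexivity | exact Hb].
Qed.

Lemma quot_lift_set_is_cls (f : A -> A) (X : quot e) :
  exists c, quot_lift_set f X = cls e c.
Proof.
  destruct (qcls_surj X) as [x ->]; exists (f (e x)); apply quot_lift_set_cls.
Qed.

Definition quot_lift (f : A -> A) (X : quot e) : quot e :=
  exist _ (quot_lift_set f X) (quot_lift_set_is_cls f X).

Lemma quot_lift_qcls (f : A -> A) (x : A) :
  quot_lift f (qcls e x) = qcls e (f (e x)).
Proof. apply quot_eq, quot_lift_set_cls. Qed.

Lemma is_hat_unique (f : A -> A) (F F' : quot e -> quot e) :
  is_hat e f F -> is_hat e f F' -> F = F'.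
Proof.
  intros HF HF'; apply functional_extensionality; intro X.
  destruct (qcls_surj X) as [x ->]; rewrite HF, HF'; reflexivity.
Qed.

Lemma is_hat_comp (f g : A -> A) (F H : quot e -> quot e) :
  is_hat e f F -> is_hat e g H -> is_hat e (comp f g) (comp F H).
Proof. intros HF HH x; unfold comp; rewrite HH, HF; reflexivity. Qed.

Lemma is_hat_id (f : A -> A) : (forall x, e (f x) = e x) -> is_hat e f (fun X => X).
Proof. intros Hf x; apply qcls_eq; symmetry; apply Hf. Qed.

End Quotient.

Arguments quot_lift {A} e f X.

Lemma bijective_of_inverse (X : Type) (h k : X -> X) :
  comp h k = (fun x => x) -> comp k h = (fun x => x) -> bijective h.
Proof.
  intros Hhk Hkh; split.
  - intros x y Hxy.
    rewrite <- (f_equal (fun u => u x) Hkh), <- (f_equal (fun u => u y) Hkh).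
    unfold comp; rewrite Hxy; reflexivity.
  - intro y; exists (k y); exact (f_equal (fun u => u y) Hhk).
Qed.

Section GroupOfMaps.

Variables (A : Type) (G : (A -> A) -> Prop) (e : A -> A).
Hypothesis HG : group_of_maps G e.

Lemma group_map_e (f : A -> A) (x : A) : G f -> f (e x) = f x.
Proof.
  intro Gf; destruct HG as [_ [_ [Hunit _]]].
  exact (f_equal (fun u => u x) (proj2 (Hunit f Gf))).
Qed.

Lemma e_group_map (f : A -> A) (x : A) : G f -> e (f x) = f x.
Proof.
  intro Gf; destruct HG as [_ [_ [Hunit _]]].
  exact (f_equal (fun u => u x) (proj1 (Hunit f Gf))).
Qed.

Lemma is_hat_quot_lift (f : A -> A) : G f -> is_hat e f (quot_lift e f).
Proof. intros Gf x; rewrite quot_lift_qcls, group_map_e; auto. Qed.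

Lemma quot_lift_unit : quot_lift e e = (fun X => X).
Proof.
  destruct HG as [Ge _].
  apply (is_hat_unique (is_hat_quot_lift Ge)), is_hat_id.
  intro x; apply e_group_map, Ge.
Qed.

Lemma quot_lift_comp (f g : A -> A) :
  G f -> G g -> quot_lift e (comp f g) = comp (quot_lift e f) (quot_lift e g).
Proof.
  intros Gf Gg; destruct HG as [_ [Gcomp _]].
  apply (is_hat_unique (is_hat_quot_lift (Gcomp f g Gf Gg))).
  apply is_hat_comp; apply is_hat_quot_lift; assumption.
Qed.

Lemma quot_lift_inj (f g : A -> A) :
  G f -> G g -> quot_lift e f = quot_lift e g -> f = g.
Proof.
  intros Gf Gg Hfg; apply functional_extensionality; intro x.
  apply (f_equal (fun F => F (qcls e x))) in Hfg.
  rewrite (is_hat_quot_lift Gf), (is_hat_quot_lift Gg), qcls_eq in Hfg.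
  rewrite <- (e_group_map x Gf), <- (e_group_map x Gg); exact Hfg.
Qed.

Lemma Ghat_quot_lift (F : quot e -> quot e) :
  Ghat G e F -> exists f, G f /\ quot_lift e f = F.
Proof.
  intros [f [Gf HF]]; exists f; split; [exact Gf|].
  exact (is_hat_unique (is_hat_quot_lift Gf) HF).
Qed.

Lemma Ghat_inverse (F : quot e -> quot e) :
  Ghat G e F -> exists K, Ghat G e K /\
    comp F K = (fun X => X) /\ comp K F = (fun X => X).
Proof.
  intro HF; destruct (Ghat_quot_lift HF) as [f [Gf <-]].
  destruct HG as [_ [_ [_ Hinv]]].
  destruct (Hinv f Gf) as [g [Gg [Hfg Hgf]]].
  exists (quot_lift e g); split; [exists g; split; [exact Gg | apply is_hat_quot_lift, Gg]|].
  rewrite <- !quot_lift_comp, Hfg, Hgf, quot_lift_unit by assumption; split; reflexivity.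
Qed.

Lemma Ghat_perm_group : perm_group (Ghat G e).
Proof.
  destruct HG as [Ge [Gcomp _]].
  split; [| split; [| split]].
  - intros F HF; destruct (Ghat_inverse HF) as [K [_ [HFK HKF]]].
    exact (bijective_of_inverse HFK HKF).
  - rewrite <- quot_lift_unit; exists e; split; [exact Ge | apply is_hat_quot_lift, Ge].
  - intros F H [f [Gf HF]] [g [Gg HH]].
    exists (comp f g); split; [apply Gcomp; assumption | apply is_hat_comp; assumption].
  - exact Ghat_inverse.
Qed.

End GroupOfMaps.

Theorem theorem2p8 (A : Type) (a0 : A) (G : (A -> A) -> Prop) (e : A -> A)
  (HG : group_of_maps G e) :
  (* f-hat is well defined: for each f in G there is exactly one map with F [x] = [f x] *)
  (forall f, G f -> exists F, is_hat e f F /\ forall F', is_hat e f F' -> F' = F) /\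
  (* G-hat is a permutation group on A/~ *)
  perm_group (Ghat G e) /\
  (* rho : f |-> f-hat is a group isomorphism G -> G-hat *)
  (exists rho : (A -> A) -> (quot e -> quot e),
     (forall f, G f -> is_hat e f (rho f)) /\
     (forall f g, G f -> G g -> rho (comp f g) = comp (rho f) (rho g)) /\
     (forall f g, G f -> G g -> rho f = rho g -> f = g) /\
     (forall F, Ghat G e F -> exists f, G f /\ rho f = F)).
Proof.
  split; [| split].
  - intros f Gf; exists (quot_lift e f); split; [exact (is_hat_quot_lift HG Gf)|].
    intros F' HF'; exact (is_hat_unique HF' (is_hat_quot_lift HG Gf)).
  - exact (Ghat_perm_group HG).
  - exists (quot_lift e); split; [| split; [| split]].
    + exact (is_hat_quot_lift HG).
    + exact (quot_lift_comp HG).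
    + exact (quot_lift_inj HG).
    + exact (Ghat_quot_lift HG).
Qed.
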